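(* Let $N=\{1,\ldots,n\}$ and let $\mathscr{D}$ be a family of subsets in $2^N\setminus\{\varnothing,N\}$. Let $v_{\mathscr{D}}$ be the game defined by $v_{\mathscr{D}}(S)=1$ if $S\in\mathscr{D}$ or $S=N$, and $v_{\mathscr{D}}(S)=0$ otherwise. Then $v_{\mathscr{D}}$ is a vertex of $\mathscr{BG}_+(n)$ if and only if either $\mathscr{D}=\varnothing$ or $\bigcap_{S\in\mathscr{D}}S\neq\varnothing$.
   Context: A game on $N$ is a map $v:2^N\to\mathbb{R}$ with $v(\varnothing)=0$. $\mathscr{G}_+(n)$ is the set of games with $v\geqslant 0$ and $v(N)=1$. The core of $v$ is $C(v)=\{x\in\mathbb{R}^N: \sum_{i\in S}x_i\geqslant v(S)\ \forall S,\ \sum_{i\in N}x_i=v(N)\}$, and $v$ is balanced iff $C(v)\neq\varnothing$. $\mathscr{BG}_+(n)$ is the polytope of balanced games in $\mathscr{G}_+(n)$, in $\mathbb{R}^{2^N\setminus\{\varnothing,N\}}$. *)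

(* Games on N = 'I_n (players 0..n-1, standing for 1..n). *)
From HB Require Import structures.
From mathcomp Require Import all_boot all_order all_algebra.
Set Implicit Arguments. Unset Strict Implicit. Unset Printing Implicit Defensive.
Import Order.TTheory GRing.Theory Num.Theory.
Local Open Scope ring_scope.

Definition game (R : realFieldType) (n : nat) := {set 'I_n} -> R.

Definition is_game (R : realFieldType) n (v : game R n) : Prop := v set0 = 0.

Definition in_Gplus (R : realFieldType) n (v : game R n) : Prop :=
  is_game v /\ (forall S, 0 <= v S) /\ v setT = 1.

Definition in_core (R : realFieldType) n (v : game R n) (x : 'I_n -> R) : Prop :=
  (forall S : {set 'I_n}, v S <= \sum_(i in S) x i) /\ \sum_(i < n) x i = v setT.

Definition balanced (R : realFieldType) n (v : game R n) : Prop :=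
  exists x : 'I_n -> R, in_core v x.

Definition in_BGplus (R : realFieldType) n (v : game R n) : Prop :=
  in_Gplus v /\ balanced v.

(* Coordinates of the ambient space R^{2^N \ {empty, N}}. *)
Definition coord_set n (S : {set 'I_n}) : bool := (S != set0) && (S != setT).

Definition is_vertex_BGplus (R : realFieldType) n (v : game R n) : Prop :=
  in_BGplus v /\
  forall (u w : game R n) (t : R),
    in_BGplus u -> in_BGplus w -> 0 < t -> t < 1 ->
    (forall S, coord_set S -> v S = t * u S + (1 - t) * w S) ->
    forall S, coord_set S -> u S = w S.

Definition vD (R : realFieldType) n (D : {set {set 'I_n}}) : game R n :=
  fun S => if (S \in D) || (S == setT) then 1 else 0.

(** A core allocation [x] of a nonnegative game with [v N = 1] is a
    probability vector with [x(S) >= v S = 1 = x(N)] for every [S] of worth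
    [1], so every player [i] with [x i > 0] lies in all such [S]: the
    coalitions of [D] must share a player.  Conversely, if player [i] lies in
    every [S] of [D], the Dirac allocation at [i] is in the core of [v_D], and
    a [0/1]-valued point of a subset of the unit cube is always extreme. *)
From HB Require Import structures.
From mathcomp Require Import all_boot all_order all_algebra.
From mathcomp Require Import lra.
Set Implicit Arguments. Unset Strict Implicit. Unset Printing Implicit Defensive.
Import Order.TTheory GRing.Theory Num.Theory.
Local Open Scope ring_scope.

Section NonnegWeights.

Variables (R : realFieldType) (n : nat) (x : 'I_n -> R).
Hypothesis x_ge0 : forall i, 0 <= x i.

Lemma sum_in_set_le (S : {set 'I_n}) : \sum_(i in S) x i <= \sum_(i < n) x i.
Proof. by rewrite big_mkcond /=; apply: ler_sum => i _; case: (i \in S). Qed.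

Lemma sum_in_set_lt (S : {set 'I_n}) (i : 'I_n) :
  i \notin S -> 0 < x i -> \sum_(j in S) x j < \sum_(j < n) x j.
Proof.
move=> iNS xi_gt0; rewrite [X in _ < X](bigID (mem S)) /= ltrDl.
by rewrite (bigD1 i) //= ltr_pwDl // sumr_ge0.
Qed.

End NonnegWeights.

Section NonnegGames.

Variables (R : realFieldType) (n : nat) (v : game R n).
Hypothesis v_ge0 : forall S, 0 <= v S.

Lemma core_ge0 (x : 'I_n -> R) : in_core v x -> forall i, 0 <= x i.
Proof.
move=> [core_x _] i; apply: le_trans (v_ge0 [set i]) _.
by have := core_x [set i]; rewrite big_set1.
Qed.

Lemma core_support_sub (x : 'I_n -> R) (S : {set 'I_n}) (i : 'I_n) :
  in_core v x -> v S = v setT -> 0 < x i -> i \in S.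
Proof.
move=> cx vS xi_gt0; apply: contraTT (cx.1 S) => iNS.
by rewrite -ltNge vS -cx.2 (sum_in_set_lt (core_ge0 cx) iNS xi_gt0).
Qed.

End NonnegGames.

Lemma in_BGplus_bounds (R : realFieldType) n (v : game R n) :
  in_BGplus v -> forall S, 0 <= v S <= 1.
Proof.
move=> [[_ [v_ge0 vT]] [x cx]] S; rewrite v_ge0 /= -vT -cx.2.
exact: le_trans (cx.1 S) (sum_in_set_le (core_ge0 v_ge0 cx) S).
Qed.

Lemma balanced_common_player (R : realFieldType) n (v : game R n) :
  in_Gplus v -> balanced v -> exists i, forall S, v S = 1 -> i \in S.
Proof.
move=> [_ [v_ge0 vT]] [x cx].
have x_ge0 := core_ge0 v_ge0 cx.
have [|i /andP [_ xi_gt0]] := @psumr_neq0P _ _ predT x (fun i _ => x_ge0 i).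
  by rewrite cx.2 vT; apply/eqP; rewrite oner_eq0.
by exists i => S vS; apply: (core_support_sub v_ge0 cx _ xi_gt0); rewrite vS vT.
Qed.

Lemma convex_comb_01_eq (R : realFieldType) (a b c t : R) :
  a = 0 \/ a = 1 -> 0 <= b <= 1 -> 0 <= c <= 1 -> 0 < t -> t < 1 ->
  a = t * b + (1 - t) * c -> b = c.
Proof. by move=> [->|->] /andP [? ?] /andP [? ?] ? ?; nra. Qed.

Lemma is_vertex_BGplus_01 (R : realFieldType) n (v : game R n) :
  in_BGplus v -> (forall S, v S = 0 \/ v S = 1) -> is_vertex_BGplus v.
Proof.
move=> v_in v01; split=> // u w t u_in w_in t_gt0 t_lt1 v_comb S cS.
apply: convex_comb_01_eq (v01 S) _ _ t_gt0 t_lt1 (v_comb S cS);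
  exact: in_BGplus_bounds.
Qed.

Section GameOfFamily.

Variables (R : realFieldType) (n : nat) (D : {set {set 'I_n}}).

Lemma vD_01 S : vD R D S = 0 \/ vD R D S = 1.
Proof. by rewrite /vD; case: ifP; [right | left]. Qed.

Lemma vD_eq1 S : S \in D -> vD R D S = 1.
Proof. by rewrite /vD => ->. Qed.

Lemma in_BGplus_vD (i : 'I_n) :
  (forall S, S \in D -> i \in S) -> in_BGplus (vD R D).
Proof.
move=> iD.
have iS S : vD R D S = 1 -> i \in S.
  rewrite /vD; case: ifP => [/orP [/iD // | /eqP ->] _ | _ /eqP];
    by rewrite ?inE // eq_sym oner_eq0.
split; [split; [|split] |].
- by case: (vD_01 set0) => // /iS; rewrite inE.
- by move=> S; case: (vD_01 S) => ->.
- by rewrite /vD eqxx orbT.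
exists (fun j => (j == i)%:R); split.
  move=> S; case: (vD_01 S) => [-> | vS]; first by rewrite sumr_ge0.
  by rewrite vS (bigD1 i) ?iS //= eqxx big1 ?addr0 // => j /andP [_ /negbTE ->].
by rewrite (bigD1 i) //= eqxx big1 ?addr0 /vD ?eqxx ?orbT // => j /negbTE ->.
Qed.

End GameOfFamily.

Theorem theorem9 (R : realFieldType) (n : nat) (D : {set {set 'I_n}}) :
  (0 < n)%N ->
  (forall S, S \in D -> coord_set S) ->
  is_vertex_BGplus (vD R D) <->
  (D = set0 \/ \bigcap_(S in D) S != set0).
Proof.
move=> n_gt0 _; split.
- move=> [[vD_G vD_bal] _].
  have [i iD] := balanced_common_player vD_G vD_bal.
  have [-> | _] := eqVneq D set0; [by left | right].
  by apply/set0Pn; exists i; apply/bigcapP => S SD; apply/iD/vD_eq1.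
- move=> D_cap.
  have [i iD] : exists i : 'I_n, forall S, S \in D -> i \in S.
    case: D_cap => [-> | /set0Pn [i /bigcapP iD]]; last by exists i.
    by exists (Ordinal n_gt0) => S; rewrite inE.
  exact: is_vertex_BGplus_01 (in_BGplus_vD R iD) (@vD_01 R n D).
Qed.
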